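(* Let $\mathbf{X}\in\{0,1\}^{m\times n}$ and let $C\subseteq\mathrm{supp}(\mathbf{X})$ be the vertex set of an odd hole of size $|C|=2k+1$ in $\mathcal{G}(\mathbf{X})$, and suppose $Q:=\mathrm{supp}(\mathbf{X})\setminus C$ is nonempty. Then $i(\mathcal{S}^Q(\mathbf{X}))=k+|Q|$ and $br(\mathcal{S}^Q(\mathbf{X}))=k+1+|Q|$; in particular $\mathcal{S}^Q(\mathbf{X})$ is not firm.
   Context: For a binary matrix $\mathbf{X}$, $\mathrm{supp}(\mathbf{X})=\{(i,j):x_{i,j}=1\}$; a rectangle is a set $I\times J\subseteq\mathrm{supp}(\mathbf{X})$. An isolated set is a subset of $\mathrm{supp}(\mathbf{X})$ no two distinct elements of which lie in a common rectangle; $i(\mathbf{X})$ is its maximum size, and $br(\mathbf{X})$ is the minimum number of rectangles whose union is $\mathrm{supp}(\mathbf{X})$. $\mathbf{X}$ is firm if $i(\mathbf{X}')=br(\mathbf{X}')$ for every submatrix $\mathbf{X}'$ (including $\mathbf{X}$). The rectangle cover graph $\mathcal{G}(\mathbf{X})$ has vertex set $\mathrm{supp}(\mathbf{X})$, two vertices adjacent iff some rectangle contains both. An odd hole is an induced chordless cycle of odd length at least $5$. Stretching: for nonempty $Q=\{(\ell_1,k_1),\dots,(\ell_q,k_q)\}\subseteq\mathrm{supp}(\mathbf{X})$ listed in lexicographic order, $\mathcal{S}^Q(\mathbf{X})$ is the $(m+q)\times(n+q)$ binary matrix whose top-left $m\times n$ block is $\mathbf{X}$, whose entries at $(\ell_t,n+t)$,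 $(m+t,k_t)$, $(m+t,n+t)$ equal $1$ for each $t\in[q]$, and all of whose other entries are $0$. *)

From mathcomp Require Import all_boot all_algebra.
Set Implicit Arguments. Unset Strict Implicit. Unset Printing Implicit Defensive.

Section BinMat.
Variables (m n : nat).
Local Notation pos := ('I_m * 'I_n)%type.

Definition supp (X : 'M[bool]_(m, n)) : {set pos} := [set p | X p.1 p.2].

Definition rect (X : 'M[bool]_(m, n)) (I : {set 'I_m}) (J : {set 'I_n}) : bool :=
  setX I J \subset supp X.

Definition common_rect (X : 'M[bool]_(m, n)) (p r : pos) : bool :=
  [exists I : {set 'I_m}, exists J : {set 'I_n},
     [&& rect X I J, p \in setX I J & r \in setX I J]].

Definition isolated (X : 'M[bool]_(m, n)) (S : {set pos}) : bool :=
  (S \subset supp X) &&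
  [forall p in S, forall r in S, (p != r) ==> ~~ common_rect X p r].

Definition iso_num (X : 'M[bool]_(m, n)) : nat :=
  \max_(S : {set pos} | isolated X S) #|S|.

Definition rect_cover (X : 'M[bool]_(m, n))
    (F : {set ({set 'I_m} * {set 'I_n})}) : bool :=
  [forall R in F, rect X R.1 R.2] &&
  (\bigcup_(R in F) setX R.1 R.2 == supp X).

(* Boolean rank br(X): minimum size of a rectangle cover.  The default value
   #|supp X| is attained by the cover by singleton rectangles, so it does not
   affect the minimum. *)
Definition brank (X : 'M[bool]_(m, n)) : nat :=
  \big[minn/#|supp X|]_(F : {set ({set 'I_m} * {set 'I_n})} | rect_cover X F) #|F|.

Definition rc_adj (X : 'M[bool]_(m, n)) (p r : pos) : bool :=
  [&& p \in supp X, r \in supp X, p != r & common_rect X p r].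

(* c (a duplicate-free cyclic listing of vertices) is an odd hole of G(X):
   an induced chordless cycle of odd length >= 5, whose edges are exactly the
   pairs of cyclically consecutive entries of c. *)
Definition odd_hole_seq (X : 'M[bool]_(m, n)) (c : seq pos) : bool :=
  if c is x0 :: _ then
  [&& uniq c, odd (size c), 5 <= size c, all (mem (supp X)) c &
   [forall i : 'I_(size c), forall j : 'I_(size c), (i != j) ==>
      (rc_adj X (nth x0 c i) (nth x0 c j) ==
       ((val j == (i.+1 %% size c)) || (val i == (j.+1 %% size c))))]]
  else false.

Definition odd_hole (X : 'M[bool]_(m, n)) (C : {set pos}) : Prop :=
  exists c : seq pos, odd_hole_seq X c /\ C = [set x in c].

Definition lexle (p r : pos) : bool :=
  (val p.1 < val r.1) || ((p.1 == r.1) && (val p.2 <= val r.2)).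

Definition lex_enum (Q : {set pos}) : seq pos := sort lexle (enum Q).

Definition qentry (Q : {set pos}) (t : nat) : option pos :=
  nth None (map Some (lex_enum Q)) t.

Definition stretch (X : 'M[bool]_(m, n)) (Q : {set pos}) :
    'M[bool]_(m + #|Q|, n + #|Q|) :=
  \matrix_(i, j)
    match split i, split j with
    | inl i', inl j' => X i' j'
    | inl i', inr t => if qentry Q t is Some p then p.1 == i' else false
    | inr t, inl j' => if qentry Q t is Some p then p.2 == j' else false
    | inr t, inr t' => t == t'
    end.
End BinMat.

(* submatrix given by strictly increasing row / column selections *)
Definition firm m n (X : 'M[bool]_(m, n)) : Prop :=
  forall m' n' (f : 'I_m' -> 'I_m) (g : 'I_n' -> 'I_n),
    {homo f : x y / x < y} -> {homo g : x y / x < y} ->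
    iso_num (mxsub f g X) = brank (mxsub f g X).

From mathcomp Require Import all_boot all_order all_algebra zify.

Set Implicit Arguments. Unset Strict Implicit. Unset Printing Implicit Defensive.

(* Write Y for S^Q(X) and C for the hole.  Every entry of supp Y is either an entry of C in
   the top-left block or lies in one of the |Q| all-ones 2x2 blocks
   {q_t, (l_t, n+t), (m+t, k_t), (m+t, n+t)}.  The diagonal entries (m+t, n+t) share a
   rectangle neither with one another nor with an entry of C, since that would force q_t
   into C.  Thus an isolated set of Y has at most k entries in C (an independent set of the
   hole) and at most one in each block, while every other vertex of the hole together with
   the |Q| diagonal entries attains k + |Q|.  In a rectangle cover, at least |Q| rectangles
   meet the diagonal entries and they are distinct from those meeting C; since the hole is
   triangle-free, a rectangle meets C in at most two entries, so at least k + 1 rectangles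
   meet C.  The |Q| blocks and k + 1 rectangles through consecutive pairs of the hole attain
   k + 1 + |Q|.  Since i(Y) < br(Y), Y itself witnesses that it is not firm. *)

Notation box R := (setX R.1 R.2).

Lemma leq_card_bigcup (I T : finType) (J : {set I}) (F : I -> {set T}) :
  #|\bigcup_(i in J) F i| <= \sum_(i in J) #|F i|.
Proof.
elim/big_rec2: _ => [|i U s _ leUs]; first by rewrite cards0.
by rewrite (leq_trans (leq_card_setU _ _)) // leq_add2l.
Qed.

Lemma leq_card_cover (I T : finType) (J : {set I}) (F : I -> {set T}) (A : {set T}) b :
  A \subset \bigcup_(i in J) F i -> {in J, forall i, #|A :&: F i| <= b} ->
  #|A| <= #|J| * b.
Proof.
move=> /subsetP coverA leAb; rewrite -sum_nat_const.
apply: (@leq_trans (\sum_(i in J) #|A :&: F i|)); last exact: leq_sum.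
apply: leq_trans (leq_card_bigcup _ _).
apply/subset_leq_card/subsetP => x Ax.
by have /bigcupP[i Ji Fix] := coverA x Ax; apply/bigcupP; exists i; rewrite ?inE ?Ax.
Qed.

Section Rectangles.
Variables (m n : nat) (Z : 'M[bool]_(m, n)).
Local Notation pos := ('I_m * 'I_n)%type.

Definition span2 (p r : pos) : {set 'I_m} * {set 'I_n} :=
  ([set p.1; r.1], [set p.2; r.2]).

Lemma mem_span2l p r : p \in box (span2 p r).
Proof. by case: p => ? ?; rewrite in_setX !in_set2 !eqxx. Qed.

Lemma mem_span2r p r : r \in box (span2 p r).
Proof. by case: r => ? ?; rewrite in_setX !in_set2 !eqxx !orbT. Qed.

Lemma common_rect_span2 p r : common_rect Z p r = rect Z (span2 p r).1 (span2 p r).2.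
Proof.
apply/idP/idP => [|rect_pr]; last first.
  by apply/existsP; exists (span2 p r).1; apply/existsP; exists (span2 p r).2;
    rewrite rect_pr mem_span2l mem_span2r.
case/existsP=> I /existsP[J /and3P[/subsetP rectIJ]].
case: p r => [p1 p2] [r1 r2]; rewrite !in_setX => /andP[pI pJ] /andP[rI rJ].
apply/subsetP=> -[i j]; rewrite in_setX !in_set2 => /andP[ip jp]; apply: rectIJ.
by rewrite in_setX; case/orP: ip => /eqP->; case/orP: jp => /eqP->; rewrite ?pI ?rI.
Qed.

Lemma common_rectE p r :
  common_rect Z p r = [&& Z p.1 p.2, Z p.1 r.2, Z r.1 p.2 & Z r.1 r.2].
Proof.
rewrite common_rect_span2; apply/subsetP/and4P => [rect_pr|[Zpp Zpr Zrp Zrr]].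
  have Zin i j : (i, j) \in box (span2 p r) -> Z i j by move/rect_pr; rewrite inE.
  by split; apply: Zin; rewrite in_setX !in_set2 !eqxx ?orbT.
by move=> -[i j]; rewrite in_setX !in_set2 inE => /andP[/orP[]/eqP-> /orP[]/eqP->].
Qed.

Lemma common_rectC p r : common_rect Z p r = common_rect Z r p.
Proof. by rewrite !common_rectE; do 4 case: (Z _ _). Qed.

Lemma common_rect_refl p : common_rect Z p p = (p \in supp Z).
Proof. by rewrite common_rectE inE !andbb. Qed.

Lemma rect_common_rect I J p r :
  rect Z I J -> p \in setX I J -> r \in setX I J -> common_rect Z p r.
Proof. by move=> *; apply/existsP; exists I; apply/existsP; exists J; apply/and3P. Qed.

Lemma card_rect_le1 I J (A : {set pos}) : rect Z I J ->
  {in A &, forall p r, p != r -> ~~ common_rect Z p r} -> #|A :&: setX I J| <= 1.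
Proof.
move=> rectIJ isoA; apply/card_le1_eqP => p r /setIP[pA pIJ] /setIP[rA rIJ].
apply/eqP/negPn/negP => pr.
by have := isoA r p rA pA pr; rewrite (rect_common_rect rectIJ rIJ pIJ).
Qed.

Lemma card_rect_le2 I J (A : {set pos}) : rect Z I J ->
  (forall p q r, p \in A -> q \in A -> r \in A -> p != q -> q != r -> r != p ->
     ~~ [&& common_rect Z p q, common_rect Z q r & common_rect Z r p]) ->
  #|A :&: setX I J| <= 2.
Proof.
move=> rectIJ triA; rewrite leqNgt; apply/card_gt2P => -[p [q [r [[]]]]].
move=> /setIP[pA pIJ] /setIP[qA qIJ] /setIP[rA rIJ] [pq qr rp].
by have := triA p q r pA qA rA pq qr rp; rewrite !(rect_common_rect rectIJ).
Qed.

Lemma isolatedP (S : {set pos}) : reflect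
  (S \subset supp Z /\ {in S &, forall p r, p != r -> ~~ common_rect Z p r})
  (isolated Z S).
Proof.
apply: (iffP andP) => -[S_supp isoS]; split=> //.
  by move=> p r pS rS; move/forall_inP/(_ p pS)/forall_inP/(_ r rS)/implyP: isoS.
by apply/forall_inP => p pS; apply/forall_inP => r rS; apply/implyP; apply: isoS.
Qed.

Lemma leq_card_rect_cover F (A : {set pos}) b : rect_cover Z F -> A \subset supp Z ->
  (forall I J, rect Z I J -> #|A :&: setX I J| <= b) ->
  #|A| <= #|[set R in F | [exists p in A, p \in box R]]| * b.
Proof.
case/andP => /forall_inP rectF /eqP coverF /subsetP A_supp leAb.
apply: (@leq_card_cover _ _ _ (fun R => box R)); last first.
  by move=> R; rewrite inE => /andP[/rectF/leAb].
apply/subsetP => p pA; have := A_supp p pA; rewrite -coverF => /bigcupP[R RF pR].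
by apply/bigcupP; exists R; rewrite // inE RF; apply/exists_inP; exists p.
Qed.

(* [minn] and [Order.min] agree on [nat] only up to conversion: instantiate explicitly. *)
Lemma brank_le F : rect_cover Z F -> brank Z <= #|F|.
Proof. exact: (@Order.TotalTheory.bigmin_le_cond _ nat _ _ F _ _). Qed.

Lemma rect_cover_points : rect_cover Z [set span2 p p | p in supp Z].
Proof.
have rect_pt p : p \in supp Z -> rect Z (span2 p p).1 (span2 p p).2.
  by rewrite -common_rect_span2 common_rect_refl.
apply/andP; split; first by apply/forall_inP => _ /imsetP[p pZ ->]; apply: rect_pt.
rewrite eqEsubset; apply/andP; split.
  by apply/bigcupsP => _ /imsetP[p pZ ->]; apply: rect_pt.
apply/subsetP => p pZ; apply/bigcupP.
by exists (span2 p p); [apply: imset_f | apply: mem_span2l].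
Qed.

Lemma brank_ge v : (forall F, rect_cover Z F -> v <= #|F|) -> v <= brank Z.
Proof.
move=> leF; apply: (big_ind (fun b => v <= b)) => [||F]; last exact: leF.
  exact: leq_trans (leF _ rect_cover_points) (leq_imset_card _ _).
by move=> a b; rewrite leq_min => -> ->.
Qed.
End Rectangles.

Section Stretch.
Variables (m n : nat) (X : 'M[bool]_(m, n)) (Q : {set 'I_m * 'I_n}).
Hypothesis QX : Q \subset supp X.
Local Notation N := #|Q|.
Local Notation Y := (stretch X Q).

Lemma perm_lex_enum : perm_eq (lex_enum Q) (enum Q).
Proof. by rewrite /lex_enum perm_sort. Qed.

Lemma mem_lex_enum : lex_enum Q =i Q.
Proof. by move=> p; rewrite (perm_mem perm_lex_enum) mem_enum. Qed.

Lemma size_lex_enum : size (lex_enum Q) = N.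
Proof. by rewrite (perm_size perm_lex_enum) cardE. Qed.

(* [qpos t] is the entry q_t = (l_t, k_t) of the paper; the default of [nth] is never used. *)
Definition qpos (t : 'I_N) : 'I_m * 'I_n := nth (enum_val t) (lex_enum Q) t.

Lemma qentryE (t : 'I_N) : qentry Q t = Some (qpos t).
Proof. by rewrite /qentry (nth_map (enum_val t)) // size_lex_enum. Qed.

Lemma qpos_in t : qpos t \in Q.
Proof. by rewrite -mem_lex_enum mem_nth // size_lex_enum. Qed.

Lemma qposP p : p \in Q -> exists t, p = qpos t.
Proof.
rewrite -mem_lex_enum => pQ.
have ltpN : index p (lex_enum Q) < N by rewrite -size_lex_enum index_mem.
by exists (Ordinal ltpN); rewrite /qpos nth_index.
Qed.

Lemma stretch_ll i j : Y (lshift N i) (lshift N j) = X i j.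
Proof. by rewrite mxE -/(unsplit (inl i)) -/(unsplit (inl j)) !unsplitK. Qed.

Lemma stretch_lr i (t : 'I_N) : Y (lshift N i) (rshift n t) = ((qpos t).1 == i).
Proof. by rewrite mxE -/(unsplit (inl i)) -/(unsplit (inr t)) !unsplitK qentryE. Qed.

Lemma stretch_rl (t : 'I_N) j : Y (rshift m t) (lshift N j) = ((qpos t).2 == j).
Proof. by rewrite mxE -/(unsplit (inr t)) -/(unsplit (inl j)) !unsplitK qentryE. Qed.

Lemma stretch_rr (t t' : 'I_N) : Y (rshift m t) (rshift n t') = (t == t').
Proof. by rewrite mxE -/(unsplit (inr t)) -/(unsplit (inr t')) !unsplitK. Qed.

Definition embed (p : 'I_m * 'I_n) : 'I_(m + N) * 'I_(n + N) :=
  (lshift N p.1, lshift N p.2).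

Definition qdiag (t : 'I_N) : 'I_(m + N) * 'I_(n + N) := (rshift m t, rshift n t).

Definition qrect t := span2 (embed (qpos t)) (qdiag t).

Lemma embed_inj : injective embed.
Proof. by move=> [i j] [i' j'] [/val_inj-> /val_inj->]. Qed.

Lemma qdiag_inj : injective qdiag.
Proof. by move=> t t' [/addnI/val_inj]. Qed.

Lemma embed_neq_qdiag p t : embed p != qdiag t.
Proof. by rewrite xpair_eqE eq_lrshift. Qed.

Lemma supp_embed p : (embed p \in supp Y) = (p \in supp X).
Proof. by rewrite !inE stretch_ll. Qed.

Lemma common_rect_embed p r : common_rect Y (embed p) (embed r) = common_rect X p r.
Proof. by rewrite !common_rectE /= !stretch_ll. Qed.

Lemma common_rect_qdiag t t' : common_rect Y (qdiag t) (qdiag t') = (t == t').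
Proof. by rewrite common_rectE /= !stretch_rr !eqxx (eq_sym t') andbT andbb. Qed.

Lemma common_rect_qdiag_embed t p : common_rect Y (qdiag t) (embed p) = (p == qpos t).
Proof.
rewrite common_rectE /= stretch_rr stretch_rl stretch_lr stretch_ll eqxx /=.
have := subsetP QX _ (qpos_in t); rewrite inE.
case: p (qpos t) => i j [i' j'] /= Xij'; rewrite xpair_eqE.
by have [<-|] := eqVneq i' i; have [<-|] := eqVneq j' j; rewrite ?Xij' ?andbF.
Qed.

Lemma rect_qrect t : rect Y (qrect t).1 (qrect t).2.
Proof. by rewrite -common_rect_span2 common_rectC common_rect_qdiag_embed. Qed.

Lemma supp_stretch :
  supp Y \subset embed @: (supp X :\: Q) :|: \bigcup_t box (qrect t).
Proof.
have inbox t p : p \in box (qrect t) ->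
    p \in embed @: (supp X :\: Q) :|: \bigcup_t box (qrect t).
  by move=> pt; rewrite inE; apply/orP; right; apply/bigcupP; exists t.
apply/subsetP => -[i j]; rewrite inE /= -(splitK i) -(splitK j).
case: (split i) => [i'|t]; case: (split j) => [j'|t'] /=.
- rewrite stretch_ll -[(lshift N i', _)]/(embed (i', j')) => Xij.
  have [/qposP[t ->]|notQ] := boolP ((i', j') \in Q); first exact/inbox/mem_span2l.
  by rewrite inE imset_f // !inE notQ.
- by rewrite stretch_lr => /eqP<-; apply: (inbox t'); rewrite in_setX !in_set2 !eqxx ?orbT.
- by rewrite stretch_rl => /eqP<-; apply: (inbox t); rewrite in_setX !in_set2 !eqxx ?orbT.
- by rewrite stretch_rr => /eqP<-; apply: (inbox t); apply: mem_span2r.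
Qed.
End Stretch.

Definition cycle_adj s i j := (j == i.+1 %% s) || (i == j.+1 %% s).

Lemma succ_modn s i : i < s -> i.+1 %% s = if i.+1 == s then 0 else i.+1.
Proof. by move=> lt_is; case: eqP => [->|ne]; rewrite ?modnn // modn_small; lia. Qed.

Lemma succ_modn_neq s i : 1 < s -> i < s -> i.+1 %% s != i.
Proof. by move=> *; rewrite succ_modn //; case: ifP; lia. Qed.

Lemma cycle_adj_triangle s a b d : 3 < s -> a < s -> b < s -> d < s ->
  a != b -> b != d -> d != a ->
  ~~ [&& cycle_adj s a b, cycle_adj s b d & cycle_adj s d a].
Proof. by move=> *; rewrite /cycle_adj !succ_modn //; do 3 case: ifP; lia. Qed.

Lemma cycle_adj_double s i j : i.*2.+1 < s -> j.*2.+1 < s -> i != j ->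
  ~~ cycle_adj s i.*2 j.*2.
Proof. by move=> *; rewrite /cycle_adj !succ_modn; try lia; do 2 case: ifP; lia. Qed.

Lemma next_nth_mod (T : eqType) (x0 : T) (c : seq T) i : uniq c -> i < size c ->
  next c (nth x0 c i) = nth x0 c (i.+1 %% size c).
Proof.
case: c => [//|y c] c_uniq lt_ic.
rewrite next_nth mem_nth // index_uniq // succ_modn //=.
case: eqP => [[->]|ne]; first by rewrite nth_default.
by apply: set_nth_default; move: lt_ic ne => /=; lia.
Qed.

Section OddCycle.
Variables (T : finType) (e : rel T) (x0 : T) (c : seq T).
Hypotheses (c_uniq : uniq c) (size_c_gt3 : 3 < size c).
Hypothesis c_adj : forall i j, i < size c -> j < size c -> i != j ->
  e (nth x0 c i) (nth x0 c j) = cycle_adj (size c) i j.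
Local Notation s := (size c).

Lemma size_cycle_gt1 : 1 < s.
Proof. exact: ltn_trans size_c_gt3. Qed.

Lemma next_neq x : x \in c -> next c x != x.
Proof.
move=> xc; have lt_is : index x c < s by rewrite index_mem.
rewrite -(nth_index x0 xc) next_nth_mod // nth_uniq ?ltn_pmod ?(ltnW size_cycle_gt1) //.
exact: succ_modn_neq size_cycle_gt1 lt_is.
Qed.

Lemma adj_next x : x \in c -> e x (next c x).
Proof.
move=> xc; have lt_is : index x c < s by rewrite index_mem.
rewrite -(nth_index x0 xc) next_nth_mod // c_adj ?ltn_pmod ?(ltnW size_cycle_gt1) //.
  by rewrite /cycle_adj eqxx.
by rewrite eq_sym succ_modn_neq ?size_cycle_gt1.
Qed.

Lemma indep_cycle_card (S : {set T}) : {subset S <= c} ->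
  {in S &, forall x y, x != y -> ~~ e x y} -> #|S|.*2 <= s.
Proof.
move=> Sc indepS.
have disjS : S :&: next c @: S = set0.
  apply/setP => y; rewrite !inE; apply/negP => /andP[yS /imsetP[x xS y_next]].
  by have := indepS _ _ xS yS; rewrite y_next eq_sym next_neq ?adj_next ?Sc // => /(_ isT).
rewrite -addnn -{2}(card_imset S (can_inj (prev_next c_uniq))) -cardsUI.
rewrite disjS cards0 addn0 -(card_uniqP c_uniq).
apply/subset_leq_card/subsetP => y; rewrite inE => /orP[/Sc //|/imsetP[x xS ->]].
by rewrite mem_next Sc.
Qed.

Lemma cycle_triangle_free a b d : a \in c -> b \in c -> d \in c ->
  a != b -> b != d -> d != a -> ~~ [&& e a b, e b d & e d a].
Proof.
move=> ac bc dc; rewrite -(nth_index x0 ac) -(nth_index x0 bc) -(nth_index x0 dc).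
rewrite !nth_uniq ?index_mem // => ab bd da.
by rewrite !c_adj ?index_mem // cycle_adj_triangle ?index_mem.
Qed.

Lemma cycle_even_indep i j : i.*2.+1 < s -> j.*2.+1 < s -> i != j ->
  ~~ e (nth x0 c i.*2) (nth x0 c j.*2).
Proof. by move=> *; rewrite c_adj ?cycle_adj_double //; lia. Qed.

Lemma cycle_cover_pairs y : y \in c ->
  exists2 i, i.*2 < s & y = nth x0 c i.*2 \/ y = next c (nth x0 c i.*2).
Proof.
move=> yc; have lt_ys : index y c < s by rewrite index_mem.
exists (index y c)./2.
  by rewrite (leq_ltn_trans _ lt_ys) // -{2}(odd_double_half (index y c)) leq_addl.
move: (odd_double_half (index y c)); case: (odd _) => /= y_half.
  rewrite add1n in y_half; right.
  by rewrite next_nth_mod ?y_half ?modn_small ?nth_index // ltnW.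
by left; rewrite add0n in y_half; rewrite y_half nth_index.
Qed.
End OddCycle.

Lemma odd_hole_seqP m n (X : 'M[bool]_(m, n)) (c : seq ('I_m * 'I_n)) x0 :
  odd_hole_seq X c ->
  [/\ uniq c, odd (size c), 4 < size c, {subset c <= supp X} &
      forall i j, i < size c -> j < size c -> i != j ->
        common_rect X (nth x0 c i) (nth x0 c j) = cycle_adj (size c) i j].
Proof.
case: c => [//|y c] /and5P[c_uniq c_odd size_c_gt4 /allP c_supp /forallP c_adj].
split=> // i j lt_i lt_j ij; rewrite /cycle_adj.
move/forallP/(_ (Ordinal lt_j))/implyP/(_ ij)/eqP: (c_adj (Ordinal lt_i)) => /= <-.
have inX p : p \in y :: c -> p \in supp X := c_supp p.
by rewrite /rc_adj !(set_nth_default y x0) // !inX ?mem_nth // nth_uniq // ij.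
Qed.

Section StretchInducedOddCycle.
Variables (m n : nat) (X : 'M[bool]_(m, n)) (x0 : 'I_m * 'I_n).
Variables (c : seq ('I_m * 'I_n)) (k : nat).
Hypotheses (c_uniq : uniq c) (size_c_gt3 : 3 < size c) (size_c : size c = k.*2.+1).
Hypothesis c_supp : {subset c <= supp X}.
Hypothesis c_adj : forall i j, i < size c -> j < size c -> i != j ->
  common_rect X (nth x0 c i) (nth x0 c j) = cycle_adj (size c) i j.
Local Notation Q := (supp X :\: [set x in c]).
Local Notation N := #|Q|.
Local Notation Y := (stretch X Q).

Lemma supp_stretch_cycle :
  supp Y \subset embed Q @: [set x in c] :|: \bigcup_t box (qrect t).
Proof.
apply: subset_trans (supp_stretch X Q) _; apply/setSU/imsetS/subsetP => x.
by rewrite !inE; case: (x \in c) => //=; rewrite andNb.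
Qed.

Lemma common_rect_qdiag_cycle t x : x \in c -> ~~ common_rect Y (qdiag t) (embed Q x).
Proof.
move=> xc; rewrite common_rect_qdiag_embed ?subsetDl //; apply/eqP => x_qpos.
by have := qpos_in t; rewrite -x_qpos !inE xc.
Qed.

Lemma isolated_stretch_card S : isolated Y S -> #|S| <= k + N.
Proof.
case/isolatedP => /subsetP S_supp isoS.
rewrite -(cardsID (embed Q @: [set x in c]) S) leq_add //.
  pose S' := [set x in c | embed Q x \in S].
  have : (#|S'|).*2 <= size c.
    apply: (indep_cycle_card c_uniq size_c_gt3 c_adj) => [x|x y].
      by rewrite inE => /andP[].
    rewrite !inE => /andP[_ xS] /andP[_ yS] xy; rewrite -(common_rect_embed X Q).
    by apply: isoS; rewrite ?(inj_eq (@embed_inj _ _ Q)).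
  rewrite size_c -ltnS -doubleS ltn_double ltnS -(card_imset S' (@embed_inj _ _ Q)).
  apply/leq_trans/subset_leq_card/subsetP => p; rewrite inE => /andP[pS /imsetP[x xc p_x]].
  by rewrite p_x imset_f // inE -p_x pS andbT; rewrite inE in xc.
apply: (@leq_trans (#|[set: 'I_N]| * 1)); last by rewrite cardsT card_ord muln1.
apply: leq_card_cover => [|t _]; last first.
  by apply: (card_rect_le1 (rect_qrect (subsetDl _ _) t)); apply: sub_in2 isoS => p /setDP[].
apply/subsetP => p /setDP[pS p_embed]; have := subsetP supp_stretch_cycle p (S_supp p pS).
by rewrite inE (negbTE p_embed) => /bigcupP[t _ pt]; apply/bigcupP; exists t.
Qed.

Lemma isolated_stretch_witness : exists2 S, isolated Y S & #|S| = k + N.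
Proof.
have lt_even (i : 'I_k) : (i : nat).*2.+1 < size c by rewrite size_c ltnS ltn_double.
pose Se := [set embed Q (nth x0 c (i : nat).*2) | i : 'I_k].
pose Sd := [set qdiag t | t : 'I_N].
exists (Se :|: Sd).
  apply/isolatedP; split.
    rewrite subUset; apply/andP; split; apply/subsetP => _ /imsetP[i _ ->].
      by rewrite supp_embed c_supp // mem_nth // ltnW.
    by rewrite -common_rect_refl common_rect_qdiag.
  move=> p r; rewrite !in_setU => /orP[]/imsetP[i _ ->] /orP[]/imsetP[j _ ->] pr.
  - rewrite common_rect_embed (cycle_even_indep c_uniq size_c_gt3 c_adj) //.
    by apply: contraNneq pr => /val_inj ->; apply: eqxx.
  - by rewrite common_rectC common_rect_qdiag_cycle // mem_nth // ltnW.
  - by rewrite common_rect_qdiag_cycle // mem_nth // ltnW.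
  - by rewrite common_rect_qdiag; apply: contraNneq pr => ->; apply: eqxx.
have cardSe : #|Se| = k.
  rewrite card_imset ?card_ord // => i j /embed_inj/eqP.
  by rewrite nth_uniq ?(ltnW (lt_even _)) // => /eqP/double_inj/val_inj.
have cardSd : #|Sd| = N by rewrite card_imset ?card_ord //; apply: qdiag_inj.
have disjS : Se :&: Sd = set0.
  apply/setP => p; rewrite !inE; apply/negP => /andP[/imsetP[i _ ->] /imsetP[t _ /eqP]].
  by rewrite (negbTE (embed_neq_qdiag _ _)).
by have := cardsUI Se Sd; rewrite disjS cards0 addn0 cardSe cardSd.
Qed.

Lemma rect_cover_stretch_card F : rect_cover Y F -> k + 1 + N <= #|F|.
Proof.
move=> coverF; have /andP[/forall_inP rectF _] := coverF.
pose Se := embed Q @: [set x in c].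
pose Sd := [set qdiag t | t : 'I_N].
pose meets (A : {set _}) := [set R in F | [exists p in A, p \in box R]].
have disjF : meets Se :&: meets Sd = set0.
  apply/setP => R; rewrite !inE; apply/negP.
  case/andP => /andP[RF /exists_inP[_ /imsetP[x xc ->] xR]].
  case/andP => _ /exists_inP[_ /imsetP[t _ ->] tR].
  rewrite inE in xc; have := common_rect_qdiag_cycle t xc.
  by rewrite (rect_common_rect (rectF R RF) tR xR).
have le_F : #|meets Se| + #|meets Sd| <= #|F|.
  rewrite -cardsUI disjF cards0 addn0; apply: subset_leq_card.
  by rewrite subUset; apply/andP; split; apply/subsetP => R; rewrite inE => /andP[].
have le_Se : #|Se| <= #|meets Se| * 2.
  apply: (leq_card_rect_cover coverF) => [|I J rectIJ].
    by apply/subsetP => _ /imsetP[x xc ->]; rewrite supp_embed c_supp //; rewrite inE in xc.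
  apply: card_rect_le2 rectIJ _ => _ _ _ /imsetP[a ac ->] /imsetP[b bc ->] /imsetP[d dc ->].
  rewrite !(inj_eq (@embed_inj _ _ Q)) !common_rect_embed; rewrite !inE in ac bc dc.
  exact: (cycle_triangle_free c_uniq size_c_gt3 c_adj).
have le_Sd : #|Sd| <= #|meets Sd| * 1.
  apply: (leq_card_rect_cover coverF) => [|I J rectIJ].
    by apply/subsetP => _ /imsetP[t _ ->]; rewrite -common_rect_refl common_rect_qdiag.
  apply: card_rect_le1 rectIJ _ => _ _ /imsetP[t _ ->] /imsetP[t' _ ->] tt'.
  by rewrite common_rect_qdiag; apply: contraNneq tt' => ->; apply: eqxx.
have cardSe : #|Se| = k.*2.+1.
  by rewrite card_imset; [rewrite cardsE -size_c; apply/card_uniqP | apply: embed_inj].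
have cardSd : #|Sd| = N by rewrite card_imset ?card_ord //; apply: qdiag_inj.
move: le_F le_Se le_Sd; rewrite cardSe cardSd; lia.
Qed.

Lemma rect_cover_stretch : exists2 F, rect_cover Y F & #|F| <= k + 1 + N.
Proof.
pose pair (i : 'I_k.+1) :=
  let x := nth x0 c (i : nat).*2 in span2 (embed Q x) (embed Q (next c x)).
pose F := [set qrect t | t : 'I_N] :|: [set pair i | i : 'I_k.+1].
exists F; last first.
  apply: leq_trans (leq_card_setU _ _) _; rewrite [k + 1 + N]addnC addn1.
  by apply: leq_add; apply: leq_trans (leq_imset_card _ _) _; rewrite card_ord.
have rect_pair i : rect Y (pair i).1 (pair i).2.
  have lt_i : (i : nat).*2 < size c by rewrite size_c ltnS leq_double -ltnS.
  by rewrite -common_rect_span2 common_rect_embed (adj_next c_uniq size_c_gt3 c_adj) ?mem_nth.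
have rectF : {in F, forall R, rect Y R.1 R.2}.
  move=> R; rewrite inE => /orP[]/imsetP[i _ ->]; last exact: rect_pair.
  exact: rect_qrect (subsetDl _ _) i.
apply/andP; split; first exact/forall_inP.
rewrite eqEsubset; apply/andP; split; first by apply/bigcupsP.
apply/subsetP => p /(subsetP supp_stretch_cycle); rewrite inE.
case/orP => [/imsetP[x xc ->]|/bigcupP[t _ pt]]; apply/bigcupP; last first.
  by exists (qrect t); rewrite // inE imset_f.
rewrite inE in xc; have [i lt_i x_i] := cycle_cover_pairs x0 c_uniq xc.
have lt_ik : i < k.+1 by rewrite -ltn_double doubleS ltnS -size_c ltnW.
exists (pair (Ordinal lt_ik)); first by rewrite inE imset_f ?orbT.
by case: x_i => ->; [apply: mem_span2l | apply: mem_span2r].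
Qed.

Lemma iso_num_stretch : iso_num Y = k + N.
Proof.
apply/eqP; rewrite eqn_leq; apply/andP; split.
  by apply/bigmax_leqP => S; apply: isolated_stretch_card.
by have [S isoS <-] := isolated_stretch_witness; apply: leq_bigmax_cond.
Qed.

Lemma brank_stretch : brank Y = k + 1 + N.
Proof.
apply/eqP; rewrite eqn_leq brank_ge ?andbT; last exact: rect_cover_stretch_card.
by have [F coverF le_F] := rect_cover_stretch; apply: leq_trans (brank_le coverF) le_F.
Qed.
End StretchInducedOddCycle.

Theorem mainTheorem9 (m n : nat) (X : 'M[bool]_(m, n))
    (C : {set 'I_m * 'I_n}) (k : nat) :
  odd_hole X C -> #|C| = k.*2.+1 ->
  supp X :\: C != set0 ->
  let Q := supp X :\: C in
  [/\ iso_num (stretch X Q) = k + #|Q|,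
      brank (stretch X Q) = k + 1 + #|Q| &
      ~ firm (stretch X Q)].
Proof.
move=> [c [hole ->]] card_C _; case: c hole card_C => [//|x0 c] hole card_C Q.
have [c_uniq _ size_c_gt4 c_supp c_adj] := odd_hole_seqP x0 hole.
have size_c : size (x0 :: c) = k.*2.+1 by rewrite -card_C cardsE (card_uniqP c_uniq).
have iso_eq := iso_num_stretch c_uniq (ltnW size_c_gt4) size_c c_supp c_adj.
have brank_eq := brank_stretch c_uniq (ltnW size_c_gt4) size_c c_supp c_adj.
split=> // firm_Y; have := firm_Y _ _ id id (fun _ _ lt => lt) (fun _ _ lt => lt).
by rewrite mxsub_id /Q iso_eq brank_eq addnAC addn1; apply: n_Sn.
Qed.
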